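(* Assume $\mathrm{recc}(C)\subseteq\mathrm{recc}(P^B)$. Fix $k\in N_2$ and assume $N_0\not\subseteq J$. Fix $\hat x\in P^B$. Then the set function $g:2^{M'}\to\mathbb{R}$, $$g(S)=\sum_{i\in S}\hat x_i-\sum_{j\in N\setminus J}\frac{\hat x_j}{\varepsilon'_j(S)},$$ is supermodular. Hence $\max_{S\subseteq M'}g(S)$ is a supermodular maximization problem.
   Context: Let $A\in\mathbb{R}^{m\times n}$ have full row rank, $b\in\mathbb{R}^m$, and $P=\{x\in\mathbb{R}^n_+:Ax=b\}$. Let $C\subseteq\mathbb{R}^n$ be an open convex set. Fix a basis $B$ of $P$ with nonbasic set $N=\{1,\dots,n\}\setminus B$. Write $P=\{x:x_i=\bar b_i-\sum_{j\in N}\bar a_{ij}x_j\ (i\in B),\ x\ge0\}$ with $\bar b\ge0$. The basic solution $\bar x$ has $\bar x_i=\bar b_i$ ($i\in B$) and $0$ ($i\in N$). $P^B$ is obtained by dropping $x_i\ge0$ for $i\in B$. For $j\in N$, $\bar r^j$ has $\bar r^j_k=-\bar a_{kj}$ ($k\in B$), $\bar r^j_j=1$, and $0$ otherwise. Thus $P^B=\{\bar x+\sum_{j\in N}x_j\bar r^j:x_j\ge0\}$. It is assumed that $\bar x\notin\mathrm{cl}(C)$. For $j\in N$, $\alpha_j=\inf\{\lambda\ge0:\bar x+\lambda\bar r^j\in C\}$ and $\beta_j=\sup\{\lambda\ge0:\bar x+\lambda\bar r^j\in C\}$, with $\alpha_j=+\infty$, $\beta_j=-\infty$ if the halfline misses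 $C$. Define - $N_0=\{j:\alpha_j=+\infty,\beta_j=-\infty\}$; - $N_2=\{j:\alpha_j\in(0,\infty),\beta_j\in(\alpha_j,\infty)\}$. For a set $K$, $\mathrm{recc}(K)=\{d:x+\lambda d\in K\ \forall x\in K,\lambda\ge0\}$. We use the convention $t/+\infty=0$. For $k\in N_2$, $S_k^C=\{\bar x\}+\mathrm{conv}\big(\bigcup_{j\in N_2}\{\lambda\bar r^j:0\le\lambda<\beta_j\}\big)+\{\lambda\bar r^k:\lambda\le0\}+\mathrm{recc}(C)$. Let $J=\{i\in N:\bar r^i\in\mathrm{recc}(S_k^C)\}$. For $i\in J$, $j\in N\setminus J$, $\gamma'_{ij}=\sup\{\gamma\ge0:\bar r^i+\gamma\bar r^j\in\mathrm{recc}(S_k^C)\}$. Let $M'=\{i\in J:\gamma'_{ij}>0\ \forall j\in N\setminus J\}$. Finally, $\varepsilon'_j(S)=\min_{i\in S}\gamma'_{ij}$ for $S\ne\emptyset$ and $\varepsilon'_j(\emptyset)=+\infty$. *)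

From HB Require Import structures.
From mathcomp Require Import all_boot all_order all_algebra.
From mathcomp Require Import all_classical all_reals.
From mathcomp Require Import ereal topology normedtype.
Set Implicit Arguments. Unset Strict Implicit. Unset Printing Implicit Defensive.
Import Order.TTheory GRing.Theory Num.Theory.
Import numFieldNormedType.Exports.
Local Open Scope classical_set_scope.
Local Open Scope ring_scope.
Local Open Scope ereal_scope.
Local Open Scope ring_scope.

(* Vectors of R^n are column vectors 'cV[R]_n; coordinate i of x is x i 0. *)
Section Defs.
Variables (R : realType) (n : nat).
Notation vec := 'cV[R]_n.

Definition convexS (K : set vec) : Prop :=
  forall x y (t : R), K x -> K y -> 0 <= t -> t <= 1 -> K (t *: x + (1 - t) *: y).

Definition recc (K : set vec) : set vec :=
  [set d | forall x, K x -> forall lam : R, 0 <= lam -> K (x + lam *: d)].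

Definition conv (K : set vec) : set vec :=
  [set x | exists (p : nat) (w : 'I_p -> R) (a : 'I_p -> vec),
     [/\ (forall i, 0 <= w i), \sum_(i < p) w i = 1, (forall i, K (a i))
       & x = \sum_(i < p) w i *: a i]].

Definition msum (K L : set vec) : set vec :=
  [set z | exists x y, [/\ K x, L y & z = x + y]].

Definition PB (B : {set 'I_n}) (xbar : vec) (rbar : 'I_n -> vec) : set vec :=
  [set x | exists lam : 'I_n -> R, (forall j, j \notin B -> 0 <= lam j) /\
     x = xbar + \sum_(j | j \notin B) lam j *: rbar j].

(* alpha_j = inf {lambda >= 0 : xbar + lambda rbar^j in C} (inf of empty = +oo)
   beta_j  = sup {lambda >= 0 : xbar + lambda rbar^j in C} (sup of empty = -oo) *)
Definition alpha (C : set vec) (xbar : vec) (rbar : 'I_n -> vec) (j : 'I_n)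
  : \bar R :=
  ereal_inf [set (lam%:E) | lam in [set lam : R | 0 <= lam /\ C (xbar + lam *: rbar j)]].
Definition beta (C : set vec) (xbar : vec) (rbar : 'I_n -> vec) (j : 'I_n)
  : \bar R :=
  ereal_sup [set (lam%:E) | lam in [set lam : R | 0 <= lam /\ C (xbar + lam *: rbar j)]].

Definition N0 (C : set vec) (B : {set 'I_n}) (xbar : vec) (rbar : 'I_n -> vec) : {set 'I_n} :=
  [set j | (j \notin B) && `[< alpha C xbar rbar j = +oo%E /\ beta C xbar rbar j = -oo%E >]].

Definition N2 (C : set vec) (B : {set 'I_n}) (xbar : vec) (rbar : 'I_n -> vec) : {set 'I_n} :=
  [set j | (j \notin B) && `[< [/\ (0 < alpha C xbar rbar j)%E,
                                  (alpha C xbar rbar j < +oo)%E,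
                                  (alpha C xbar rbar j < beta C xbar rbar j)%E &
                                  (beta C xbar rbar j < +oo)%E] >]].

Definition SkC (C : set vec) (B : {set 'I_n}) (xbar : vec) (rbar : 'I_n -> vec) (k : 'I_n) : set vec :=
  msum (msum (msum [set xbar]
    (conv [set y | exists j, j \in N2 C B xbar rbar /\
             exists lam : R, [/\ 0 <= lam, (lam%:E < beta C xbar rbar j)%E
                              & y = lam *: rbar j]]))
    [set y | exists lam : R, lam <= 0 /\ y = lam *: rbar k])
    (recc C).

Definition Jset (C : set vec) (B : {set 'I_n}) (xbar : vec) (rbar : 'I_n -> vec) k : {set 'I_n} :=
  [set i | (i \notin B) && `[< recc (SkC C B xbar rbar k) (rbar i) >]].

Definition gamma' (C : set vec) (B : {set 'I_n}) (xbar : vec) (rbar : 'I_n -> vec) k (i j : 'I_n) : \bar R :=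
  ereal_sup [set (g%:E) | g in [set g : R | 0 <= g /\
                recc (SkC C B xbar rbar k) (rbar i + g *: rbar j)]].

Definition NJ (C : set vec) (B : {set 'I_n}) (xbar : vec) (rbar : 'I_n -> vec) k : {set 'I_n} :=
  [set j | (j \notin B) && (j \notin Jset C B xbar rbar k)].

Definition M' (C : set vec) (B : {set 'I_n}) (xbar : vec) (rbar : 'I_n -> vec) k : {set 'I_n} :=
  [set i in Jset C B xbar rbar k |
     `[< forall j, j \in NJ C B xbar rbar k -> (0 < gamma' C B xbar rbar k i j)%E >]].

(* epsilon'_j(S) = min_{i in S} gamma'_{ij}, and +oo for S empty *)
Definition eps' (C : set vec) (B : {set 'I_n}) (xbar : vec) (rbar : 'I_n -> vec) k (S : {set 'I_n}) (j : 'I_n) : \bar R :=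
  \big[Order.min/+oo%E]_(i in S) gamma' C B xbar rbar k i j.

(* t / e with the convention t / +oo = 0 *)
Definition divE (t : R) (e : \bar R) : R :=
  if e is r%:E then t / r else 0.

Definition gfun (C : set vec) (B : {set 'I_n}) (xbar : vec) (rbar : 'I_n -> vec) k (xhat : vec) (S : {set 'I_n}) : R :=
  \sum_(i in S) xhat i 0
  - \sum_(j in NJ C B xbar rbar k) divE (xhat j 0) (eps' C B xbar rbar k S j).

End Defs.

Definition supermodular_on (n : nat) (R : realType) (M : {set 'I_n})
  (g : {set 'I_n} -> R) : Prop :=
  forall S T : {set 'I_n}, S \subset M -> T \subset M ->
    g S + g T <= g (S :|: T) + g (S :&: T).

From HB Require Import structures.
From mathcomp Require Import all_boot all_order all_algebra.
From mathcomp Require Import all_classical all_reals.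
From mathcomp Require Import ereal topology normedtype.
Import Order.TTheory GRing.Theory Num.Theory.
Import numFieldNormedType.Exports.
Local Open Scope classical_set_scope.
Local Open Scope ring_scope.

(* For S, T in M' and every j, eps'_j(S u T) = min (eps'_j S) (eps'_j T) and
   eps'_j(S n T) >= max (eps'_j S) (eps'_j T), since eps'_j is a minimum over the set.
   As t |-> x_j / t is antitone on (0, +oo] when x_j >= 0, and f (min a b) + f (max a b) = f a + f b
   for every f, each penalty term x_j / eps'_j is submodular, while the linear part is modular.
   Only the positivity of gamma' on M' and the nonnegativity of the nonbasic coordinates of
   points of P^B are used. *)

Lemma big_setUI (I : finType) (idx : Type) (z : idx) (op : Monoid.com_law z)
    (A B : {set I}) (F : I -> idx) :
  op (\big[op/z]_(i in A) F i) (\big[op/z]_(i in B) F i) =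
  op (\big[op/z]_(i in A :|: B) F i) (\big[op/z]_(i in A :&: B) F i).
Proof.
rewrite (big_setID (A := A :|: B) A) finset.setUK finset.setDUl finset.setDv finset.set0U.
rewrite (big_setID (A := B) A) finset.setIC.
by rewrite Monoid.mulmCA Monoid.mulmC.
Qed.

Lemma min_max_sum {d : Order.disp_t} {T : orderType d} {V : nmodType}
    (f : T -> V) (a b : T) :
  f (Order.min a b) + f (Order.max a b) = f a + f b.
Proof. by rewrite /Order.min /Order.max; case: ifP => _ //; rewrite addrC. Qed.

Section MinRatio.
Variable R : realType.

Lemma le_divE (x : R) (e1 e2 : \bar R) : 0 <= x ->
  (0 < e1)%E -> (e1 <= e2)%E -> divE x e2 <= divE x e1.
Proof.
move=> x_ge0; case: e1 => [r1| |] //=; case: e2 => [r2| |] //=.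
- rewrite !lte_fin lee_fin => r1_gt0 r12.
  by rewrite ler_wpM2l // lef_pV2 ?posrE // (lt_le_trans r1_gt0).
- by rewrite lte_fin => r1_gt0 _; rewrite divr_ge0 // ltW.
Qed.

Lemma divE_bigmin_submodular (I : finType) (x : R) (F : I -> \bar R)
    (S T : {set I}) : 0 <= x ->
  (0 < \big[Order.min/+oo%E]_(i in S) F i)%E ->
  (0 < \big[Order.min/+oo%E]_(i in T) F i)%E ->
  divE x (\big[Order.min/+oo%E]_(i in S :|: T) F i) +
  divE x (\big[Order.min/+oo%E]_(i in S :&: T) F i) <=
  divE x (\big[Order.min/+oo%E]_(i in S) F i) +
  divE x (\big[Order.min/+oo%E]_(i in T) F i).
Proof.
move=> x_ge0 S_gt0 T_gt0; rewrite bigminU -[leRHS](min_max_sum (divE x)) lerD2l.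
apply: le_divE => //; first by rewrite lt_max S_gt0.
by rewrite ge_max bigminIl bigminIr.
Qed.

Lemma min_ratio_supermodular (n : nat) (w x : 'I_n -> R) (M N : {set 'I_n})
    (gam : 'I_n -> 'I_n -> \bar R) :
  (forall j, j \in N -> 0 <= x j) ->
  (forall i j, i \in M -> j \in N -> (0 < gam i j)%E) ->
  supermodular_on M (fun S => \sum_(i in S) w i
    - \sum_(j in N) divE (x j) (\big[Order.min/+oo%E]_(i in S) gam i j)).
Proof.
move=> x_ge0 gam_gt0 S T /fintype.subsetP SM /fintype.subsetP TM.
have min_gt0 U j : {subset U <= M} -> j \in N ->
    (0 < \big[Order.min/+oo%E]_(i in U) gam i j)%E.
  move=> UM jN; apply/bigmin_gtP; split=> // i /UM iM; exact: gam_gt0.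
rewrite addrACA [in leRHS]addrACA -big_setUI lerD2l -!opprD lerN2 -!big_split.
apply: ler_sum => j jN.
by apply: divE_bigmin_submodular; [exact: x_ge0 | exact: min_gt0 | exact: min_gt0].
Qed.

End MinRatio.

Lemma PB_nonbasic_ge0 (R : realType) (n : nat) (B : {set 'I_n})
    (xbar x : 'cV[R]_n) (rbar : 'I_n -> 'cV[R]_n) :
  (forall j, j \notin B -> xbar j 0 = 0) ->
  (forall j, j \notin B -> forall l, l \notin B -> rbar j l 0 = (l == j)%:R) ->
  PB B xbar rbar x -> forall j, j \notin B -> 0 <= x j 0.
Proof.
move=> xbar0 rbar_unit [lam [lam_ge0 ->]] j jB.
rewrite mxE xbar0 // add0r summxE; apply: sumr_ge0 => l lB.
by rewrite mxE mulr_ge0 ?lam_ge0 // rbar_unit // ler0n.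
Qed.

Theorem proposition9 (R : realType) (m n : nat)
  (A : 'M[R]_(m, n)) (b : 'cV[R]_m) (C : set 'cV[R]_n)
  (B : {set 'I_n}) (xbar : 'cV[R]_n) (rbar : 'I_n -> 'cV[R]_n)
  (k : 'I_n) (xhat : 'cV[R]_n) :
  (* A has full row rank *)
  \rank A = m ->
  (* C is open and convex *)
  open C -> convexS C ->
  (* B is a basis: #|B| = m and the columns of A indexed by B are independent *)
  #|B| = m ->
  (forall y : 'cV[R]_n, (forall j, j \notin B -> y j 0 = 0) -> A *m y = 0 -> y = 0) ->
  (* xbar is the basic solution, which is feasible (bbar >= 0) *)
  A *m xbar = b -> (forall j, j \notin B -> xbar j 0 = 0) ->
  (forall i, i \in B -> 0 <= xbar i 0) ->
  (* rbar^j : A rbar^j = 0, (rbar^j)_j = 1, (rbar^j)_l = 0 for other nonbasic l *)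
  (forall j, j \notin B -> A *m rbar j = 0 /\
     forall l, l \notin B -> rbar j l 0 = (l == j)%:R) ->
  (* xbar not in cl(C) *)
  ~ closure C xbar ->
  (* recc(C) subset of recc(P^B) *)
  recc C `<=` recc (PB B xbar rbar) ->
  k \in N2 C B xbar rbar ->
  ~~ (N0 C B xbar rbar \subset Jset C B xbar rbar k) ->
  PB B xbar rbar xhat ->
  supermodular_on (M' C B xbar rbar k) (gfun C B xbar rbar k xhat).
Proof.
move=> _ _ _ _ _ _ xbar0 _ rbar_spec _ _ _ _ xhat_PB.
apply: min_ratio_supermodular => [j | i j].
- rewrite inE => /andP[jB _].
  by apply: PB_nonbasic_ge0 xhat_PB j jB => // l /rbar_spec[].
- by rewrite inE => /andP[_ /asboolP]; apply.
Qed.
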